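(* Let $I=[0,1]$ and let $G$ be a group with an injective homomorphism $\rho: G \to \mathrm{Diff}^1_+(I)$ (so $G$ acts on $I$ via $\rho$). Let $H$ be a finitely generated subgroup of $G$ with generating set $S=\{h_1,\dots,h_n\}$. Let $p\in I$ lie in the frontier of $\mathrm{fix}(H)$, and let $(p_m)$ be a sequence of points of $I\setminus \mathrm{fix}(H)$ with $p_m\to p$. Then there exist sequences $k_m\in\{1,\dots,n\}$ and $e_m\in\{+1,-1\}$ such that for every $h\in[H,H]$ there is an $M$ (depending on $h$) with $$h <_{p_m} h_{k_m}^{e_m}\quad\text{for all } m\ge M,$$ i.e. $h(p_m) < h_{k_m}^{e_m}(p_m)$ for all $m \ge M$.
   Context: $\mathrm{Diff}^1_+(I)$ denotes the group of orientation-preserving $C^1$ diffeomorphisms of the closed interval $I=[0,1]$. For a subgroup $H$ acting on $I$, $\mathrm{fix}(H)$ denotes the set of points of $I$ fixed by every element of $H$, and $[H,H]$ is the commutator subgroup of $H$. For a group $G$ acting on $I$ by orientation-preserving homeomorphisms and a point $q\in I$, the relation $<_q$ on $G$ is defined by: $a <_q b$ if and only if $a(q) < b(q)$ in $I$. *)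

From Stdlib Require Import Reals.
Open Scope R_scope.
Set Implicit Arguments.
Unset Strict Implicit.

Definition inI (x : R) : Prop := 0 <= x <= 1.

Definition C1_on_I (f : R -> R) : Prop :=
  exists f' : R -> R,
    (forall x, inI x -> forall eps, 0 < eps -> exists delta, 0 < delta /\
       forall y, inI y -> 0 < Rabs (y - x) < delta ->
         Rabs ((f y - f x) / (y - x) - f' x) < eps) /\
    (forall x, inI x -> forall eps, 0 < eps -> exists delta, 0 < delta /\
       forall y, inI y -> Rabs (y - x) < delta -> Rabs (f' y - f' x) < eps).

Definition Diff1p (f : R -> R) : Prop :=
  (forall x, inI x -> inI (f x)) /\
  (exists g : R -> R,
     (forall x, inI x -> inI (g x) /\ f (g x) = x /\ g (f x) = x) /\
     C1_on_I f /\ C1_on_I g) /\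
  (forall x y, inI x -> inI y -> x < y -> f x < f y).

Record is_group (G : Type) (mul : G -> G -> G) (inv : G -> G) (one : G) : Prop := {
  grp_assoc : forall a b c, mul a (mul b c) = mul (mul a b) c;
  grp_one_l : forall a, mul one a = a;
  grp_one_r : forall a, mul a one = a;
  grp_inv_l : forall a, mul (inv a) a = one;
  grp_inv_r : forall a, mul a (inv a) = one }.

Definition inj_hom_Diff1p (G : Type) (mul : G -> G -> G) (one : G)
  (rho : G -> R -> R) : Prop :=
  (forall g, Diff1p (rho g)) /\
  (forall a b x, inI x -> rho (mul a b) x = rho a (rho b x)) /\
  (forall x, inI x -> rho one x = x) /\
  (forall a b, (forall x, inI x -> rho a x = rho b x) -> a = b).

Inductive gen_by (G : Type) (mul : G -> G -> G) (inv : G -> G) (one : G)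
  (P : G -> Prop) : G -> Prop :=
| gen_base : forall x, P x -> gen_by mul inv one P x
| gen_one : gen_by mul inv one P one
| gen_mul : forall x y, gen_by mul inv one P x -> gen_by mul inv one P y ->
            gen_by mul inv one P (mul x y)
| gen_inv : forall x, gen_by mul inv one P x -> gen_by mul inv one P (inv x).

Definition commutator_subgroup (G : Type) (mul : G -> G -> G) (inv : G -> G)
  (one : G) (H : G -> Prop) : G -> Prop :=
  gen_by mul inv one
    (fun c => exists a b, H a /\ H b /\ c = mul (mul (inv a) (inv b)) (mul a b)).

Definition fixset (G : Type) (rho : G -> R -> R) (H : G -> Prop) (q : R) : Prop :=
  inI q /\ forall h, H h -> rho h q = q.

Definition frontier_in_I (F : R -> Prop) (p : R) : Prop :=
  inI p /\
  (forall eps, 0 < eps -> exists q, F q /\ Rabs (q - p) < eps) /\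
  (forall eps, 0 < eps -> exists q, inI q /\ ~ F q /\ Rabs (q - p) < eps).

(* x^e for a sign e in {+1,-1}, encoded as a boolean (true = +1, false = -1). *)
Definition signed_pow (G : Type) (inv : G -> G) (x : G) (e : bool) : G :=
  if e then x else inv x.

(* Every element of H fixes p, because p is a limit of points of fix(H), and each
   rho a has a strict derivative lam a at p (rho a is C^1 on I).  Along H, lam is
   multiplicative, so every commutator has derivative 1 at p.  Let D x be the largest
   displacement rho (h_k^(+-1)) x - x; it is positive off fix(H), and choosing
   (k_m, e_m) to realise D (p_m) it suffices that rho h x - x <= D x / 2 near p for
   each h in [H,H].  If some generator has derivative <> 1 at p, then D x >= c |x - p|
   whereas h moves x by o(|x - p|).  Otherwise all of H has derivative 1 at p: near p
   every displacement is O(D), displacement is almost additive under composition, and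
   a commutator a^-1 b^-1 a b moves x by o(D x). *)

From Stdlib Require Import Reals Lra Lia ClassicalEpsilon Classical.
Open Scope R_scope.

Ltac rabs_split :=
  repeat match goal with
  | |- context [Rabs ?x] =>
      destruct (Rcase_abs x); [rewrite (Rabs_left x) by assumption
                              | rewrite (Rabs_right x) by assumption]
  | H : context [Rabs ?x] |- _ =>
      destruct (Rcase_abs x); [rewrite (Rabs_left x) in H by assumption
                              | rewrite (Rabs_right x) in H by assumption]
  end.

Definition near (p : R) (P : R -> Prop) : Prop :=
  exists d, 0 < d /\ forall x, inI x -> Rabs (x - p) < d -> P x.

Definition near2 (p : R) (Q : R -> R -> Prop) : Prop :=
  exists d, 0 < d /\
    forall y z, inI y -> inI z -> Rabs (y - p) < d -> Rabs (z - p) < d -> Q y z.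

Lemma near_and {p} {P Q : R -> Prop} :
  near p P -> near p Q -> near p (fun x => P x /\ Q x).
Proof.
  intros [d1 [Hd1 K1]] [d2 [Hd2 K2]].
  exists (Rmin d1 d2); split; [now apply Rmin_pos |].
  intros x Hx Hxp; assert (M1 := Rmin_l d1 d2); assert (M2 := Rmin_r d1 d2).
  split; [apply K1 | apply K2]; auto; lra.
Qed.

Lemma near2_and {p} {Q1 Q2 : R -> R -> Prop} :
  near2 p Q1 -> near2 p Q2 -> near2 p (fun y z => Q1 y z /\ Q2 y z).
Proof.
  intros [d1 [Hd1 K1]] [d2 [Hd2 K2]].
  exists (Rmin d1 d2); split; [now apply Rmin_pos |].
  intros y z Hy Hz Hyp Hzp; assert (M1 := Rmin_l d1 d2); assert (M2 := Rmin_r d1 d2).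
  split; [apply K1 | apply K2]; auto; lra.
Qed.

Lemma near_mono {p} {P Q : R -> Prop} :
  (forall x, inI x -> P x -> Q x) -> near p P -> near p Q.
Proof. intros PQ [d [Hd K]]; exists d; split; auto. Qed.

Lemma near_everywhere p (P : R -> Prop) : (forall x, inI x -> P x) -> near p P.
Proof. intros K; exists 1; split; auto; lra. Qed.

(* The factor 4 leaves room for the images of a point under two successive
   maps that fix [p] and are 2-Lipschitz there. *)
Lemma near_scale {p} {P : R -> Prop} :
  near p P -> near p (fun x => forall y, inI y -> Rabs (y - p) <= 4 * Rabs (x - p) -> P y).
Proof.
  intros [d [Hd K]]; exists (d / 4); split; [lra |].
  intros x Hx Hxp y Hy Hyp; apply K; auto; lra.
Qed.

Lemma near2_scale {p} {Q : R -> R -> Prop} :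
  near2 p Q -> near p (fun x => forall y z, inI y -> inI z ->
    Rabs (y - p) <= 4 * Rabs (x - p) -> Rabs (z - p) <= 4 * Rabs (x - p) -> Q y z).
Proof.
  intros [d [Hd K]]; exists (d / 4); split; [lra |].
  intros x Hx Hxp y z Hy Hz Hyp Hzp; apply K; auto; lra.
Qed.

Lemma near2_at_p {p} {Q : R -> R -> Prop} : inI p -> near2 p Q -> near p (fun x => Q x p).
Proof.
  intros Hp [d [Hd K]]; exists d; split; auto.
  intros x Hx Hxp; apply K; auto; rewrite Rminus_diag, Rabs_R0; lra.
Qed.

Lemma near2_comp p (b : R -> R) (L : R) (Q : R -> R -> Prop) :
  0 < L -> inI p -> b p = p -> (forall x, inI x -> inI (b x)) ->
  near2 p (fun y z => Rabs (b y - b z) <= L * Rabs (y - z)) ->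
  near2 p Q -> near2 p (fun y z => Q (b y) (b z)).
Proof.
  intros HL Hp Hbp HbI [d1 [Hd1 K1]] [d2 [Hd2 K2]].
  assert (HdL : 0 < d2 / L) by (apply Rdiv_lt_0_compat; lra).
  exists (Rmin d1 (d2 / L)); split; [now apply Rmin_pos |].
  assert (Hb : forall y, inI y -> Rabs (y - p) < Rmin d1 (d2 / L) -> Rabs (b y - p) < d2).
  { intros y Hy Hyp; assert (M1 := Rmin_l d1 (d2 / L)); assert (M2 := Rmin_r d1 (d2 / L)).
    assert (X := K1 y p Hy Hp ltac:(lra) ltac:(rewrite Rminus_diag, Rabs_R0; lra)).
    rewrite Hbp in X.
    assert (L * Rabs (y - p) < L * (d2 / L)) by (apply Rmult_lt_compat_l; lra).
    replace (L * (d2 / L)) with d2 in * by (field; lra). lra. }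
  intros y z Hy Hz Hyp Hzp; apply K2; auto.
Qed.

Definition strict_deriv (f : R -> R) (p l : R) : Prop :=
  forall eps, 0 < eps ->
    near2 p (fun y z => Rabs (f y - f z - l * (y - z)) <= eps * Rabs (y - z)).

Definition rel_deriv (f f' : R -> R) : Prop :=
  forall x, inI x -> forall eps, 0 < eps -> exists delta, 0 < delta /\
    forall y, inI y -> 0 < Rabs (y - x) < delta ->
      Rabs ((f y - f x) / (y - x) - f' x) < eps.

Lemma derivable_pt_lim_interior (f f' : R -> R) :
  rel_deriv f f' -> forall c, 0 < c < 1 -> derivable_pt_lim f c (f' c).
Proof.
  intros Hd c Hc eps Heps.
  destruct (Hd c ltac:(unfold inI; lra) eps Heps) as [d [Hd0 Hd1]].
  assert (Hpos : 0 < Rmin d (Rmin c (1 - c))) by (repeat apply Rmin_pos; lra).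
  exists (mkposreal _ Hpos); intros h Hh Hhd; simpl in Hhd.
  assert (H1 := Rmin_l d (Rmin c (1 - c))); assert (H2 := Rmin_r d (Rmin c (1 - c))).
  assert (H3 := Rmin_l c (1 - c)); assert (H4 := Rmin_r c (1 - c)).
  replace h with ((c + h) - c) at 2 by ring.
  apply Hd1.
  - unfold inI; revert Hhd; rabs_split; intros; lra.
  - replace (c + h - c) with h by ring; split; [now apply Rabs_pos_lt | lra].
Qed.

Lemma increment_bound_of_quotient (f f' : R -> R) l K x y :
  Rabs ((f y - f x) / (y - x) - f' x) < K -> Rabs (f' x - l) <= K -> y <> x ->
  Rabs (f y - f x - l * (y - x)) <= 2 * K * Rabs (y - x).
Proof.
  intros H1 H2 Hyx.
  set (q := (f y - f x) / (y - x)) in *.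
  replace (f y - f x - l * (y - x)) with ((q - l) * (y - x)) by (unfold q; field; lra).
  rewrite Rabs_mult; apply Rmult_le_compat_r; [apply Rabs_pos |].
  replace (q - l) with ((q - f' x) + (f' x - l)) by ring.
  eapply Rle_trans; [apply Rabs_triang | lra].
Qed.

(* [f] need not be differentiable at the endpoints 0 and 1 of [I] in the sense of
   [derivable_pt_lim], so the mean value theorem is applied on an inner interval
   [a', b'] and the two end pieces are controlled by the difference quotients. *)
Lemma rel_deriv_mean_value (f f' : R -> R) l K a b :
  rel_deriv f f' -> 0 < K -> inI a -> inI b -> a < b ->
  (forall c, a <= c <= b -> Rabs (f' c - l) <= K) ->
  Rabs (f b - f a - l * (b - a)) <= 2 * K * (b - a).
Proof.
  intros Hd HK Ha Hb Hab HB.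
  destruct (Hd a Ha K HK) as [da [Hda Ka]].
  destruct (Hd b Hb K HK) as [db [Hdb Kb]].
  unfold inI in *.
  set (a' := a + Rmin (da / 2) ((b - a) / 3)).
  set (b' := b - Rmin (db / 2) ((b - a) / 3)).
  assert (Ma1 := Rmin_l (da / 2) ((b - a) / 3)); assert (Ma2 := Rmin_r (da / 2) ((b - a) / 3)).
  assert (Mb1 := Rmin_l (db / 2) ((b - a) / 3)); assert (Mb2 := Rmin_r (db / 2) ((b - a) / 3)).
  assert (Ma3 : 0 < Rmin (da / 2) ((b - a) / 3)) by (apply Rmin_pos; lra).
  assert (Mb3 : 0 < Rmin (db / 2) ((b - a) / 3)) by (apply Rmin_pos; lra).
  assert (Ea : Rabs (f a' - f a - l * (a' - a)) <= 2 * K * (a' - a)).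
  { rewrite <- (Rabs_right (a' - a)) at 2 by (unfold a'; lra).
    apply increment_bound_of_quotient with f'; [| apply HB; lra | unfold a'; lra].
    apply Ka; [unfold inI, a'; lra |].
    rewrite Rabs_right by (unfold a'; lra); unfold a'; lra. }
  assert (Eb : Rabs (f b' - f b - l * (b' - b)) <= 2 * K * (b - b')).
  { replace (b - b') with (Rabs (b' - b)) by (rewrite Rabs_left by (unfold b'; lra); ring).
    apply increment_bound_of_quotient with f'; [| apply HB; lra | unfold b'; lra].
    apply Kb; [unfold inI, b'; lra |].
    rewrite Rabs_left by (unfold b'; lra); unfold b'; lra. }
  assert (Hab' : a' < b') by (unfold a', b'; lra).
  destruct (MVT_cor2 f f' a' b' Hab') as [c [Hc1 Hc2]].
  { intros c Hc; apply derivable_pt_lim_interior; auto; unfold a', b' in *; lra. }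
  assert (Em : Rabs (f b' - f a' - l * (b' - a')) <= K * (b' - a')).
  { rewrite Hc1.
    replace (f' c * (b' - a') - l * (b' - a')) with ((f' c - l) * (b' - a')) by ring.
    rewrite Rabs_mult, (Rabs_right (b' - a')) by lra.
    apply Rmult_le_compat_r; [lra | apply HB; unfold a', b' in *; lra]. }
  replace (f b - f a - l * (b - a)) with
    (- (f b' - f b - l * (b' - b)) + (f b' - f a' - l * (b' - a'))
     + (f a' - f a - l * (a' - a))) by ring.
  assert (Rabs (- (f b' - f b - l * (b' - b)) + (f b' - f a' - l * (b' - a'))
     + (f a' - f a - l * (a' - a))) <=
     Rabs (f b' - f b - l * (b' - b)) + Rabs (f b' - f a' - l * (b' - a'))
     + Rabs (f a' - f a - l * (a' - a))).
  { eapply Rle_trans; [apply Rabs_triang |].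
    eapply Rle_trans; [apply Rplus_le_compat_r, Rabs_triang |].
    rewrite Rabs_Ropp; lra. }
  nra.
Qed.

Lemma C1_strict_deriv (f : R -> R) p : C1_on_I f -> inI p -> exists l, strict_deriv f p l.
Proof.
  intros [f' [Hd Hc]] Hp; exists (f' p); intros eps Heps.
  destruct (Hc p Hp (eps / 2) ltac:(lra)) as [d [Hd0 Hd1]].
  exists d; split; auto; intros y z Hy Hz Hyp Hzp.
  assert (Hmid : forall a b, inI a -> inI b -> Rabs (a - p) < d -> Rabs (b - p) < d ->
             a < b -> Rabs (f b - f a - f' p * (b - a)) <= eps * (b - a)).
  { intros a b Ha Hb Hap Hbp Hab.
    replace (eps * (b - a)) with (2 * (eps / 2) * (b - a)) by field.
    apply rel_deriv_mean_value with f'; auto; [lra |].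
    intros c Hc'; left; apply Hd1; [unfold inI in *; lra |].
    revert Hap Hbp; rabs_split; intros; lra. }
  destruct (Rtotal_order y z) as [Hlt | [-> | Hgt]].
  - replace (f y - f z - f' p * (y - z)) with (- (f z - f y - f' p * (z - y))) by ring.
    rewrite Rabs_Ropp, (Rabs_left (y - z)) by lra.
    replace (eps * - (y - z)) with (eps * (z - y)) by ring; auto.
  - rewrite !Rminus_diag, Rmult_0_r, Rminus_diag, !Rabs_R0; lra.
  - rewrite (Rabs_right (y - z)) by lra; auto.
Qed.

Lemma exists_near_distinct p d :
  inI p -> 0 < d -> exists z, inI z /\ z <> p /\ Rabs (z - p) < d.
Proof.
  intros Hp Hd; unfold inI in *.
  set (e := Rmin d (1 / 2) / 2).
  assert (E1 := Rmin_l d (1 / 2)); assert (E2 := Rmin_r d (1 / 2)).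
  assert (E3 : 0 < Rmin d (1 / 2)) by (apply Rmin_pos; lra).
  destruct (Rle_dec p (1 / 2)).
  - exists (p + e); unfold e; rewrite Rabs_right; lra.
  - exists (p - e); unfold e; rewrite Rabs_left; lra.
Qed.

Lemma strict_deriv_unique f p l1 l2 :
  inI p -> strict_deriv f p l1 -> strict_deriv f p l2 -> l1 = l2.
Proof.
  intros Hp H1 H2.
  destruct (Req_dec l1 l2) as [| Hne]; auto; exfalso.
  assert (Hl : 0 < Rabs (l1 - l2)) by (apply Rabs_pos_lt; lra).
  assert (He : 0 < Rabs (l1 - l2) / 4) by lra.
  destruct (near2_and (H1 _ He) (H2 _ He)) as [d [Hd K]].
  destruct (exists_near_distinct p d Hp Hd) as [z [Hz [Hzp Hzd]]].
  destruct (K z p Hz Hp Hzd ltac:(rewrite Rminus_diag, Rabs_R0; lra)) as [A1 A2].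
  assert (Hzp' : 0 < Rabs (z - p)) by (apply Rabs_pos_lt; lra).
  assert (Rabs ((l1 - l2) * (z - p)) <= Rabs (l1 - l2) / 2 * Rabs (z - p)).
  { replace ((l1 - l2) * (z - p)) with
      ((f z - f p - l2 * (z - p)) - (f z - f p - l1 * (z - p))) by ring.
    eapply Rle_trans; [apply Rabs_triang | rewrite Rabs_Ropp; lra]. }
  rewrite Rabs_mult in H; nra.
Qed.

Lemma strict_deriv_ext f g p l :
  (forall x, inI x -> f x = g x) -> strict_deriv f p l -> strict_deriv g p l.
Proof.
  intros E H eps He; destruct (H eps He) as [d [Hd K]]; exists d; split; auto.
  intros y z Hy Hz Hyp Hzp; rewrite <- !E by auto; auto.
Qed.

Lemma strict_deriv_id p : strict_deriv (fun x => x) p 1.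
Proof.
  intros eps He; exists 1; split; [lra |]; intros.
  replace (y - z - 1 * (y - z)) with 0 by ring; rewrite Rabs_R0.
  apply Rmult_le_pos; [lra | apply Rabs_pos].
Qed.

Lemma strict_deriv_lipschitz f p l :
  strict_deriv f p l -> near2 p (fun y z => Rabs (f y - f z) <= (Rabs l + 1) * Rabs (y - z)).
Proof.
  intros H; destruct (H 1 ltac:(lra)) as [d [Hd K]]; exists d; split; auto.
  intros y z Hy Hz Hyp Hzp; specialize (K y z Hy Hz Hyp Hzp).
  replace (f y - f z) with ((f y - f z - l * (y - z)) + l * (y - z)) by ring.
  eapply Rle_trans; [apply Rabs_triang | rewrite Rabs_mult; lra].
Qed.

Lemma strict_deriv_comp a b p la lb :
  inI p -> b p = p -> (forall x, inI x -> inI (b x)) ->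
  strict_deriv a p la -> strict_deriv b p lb -> strict_deriv (fun x => a (b x)) p (la * lb).
Proof.
  intros Hp Hbp HbI Ha Hb eps He.
  set (L := Rabs lb + 1); set (La := Rabs la + 1).
  assert (HL : 0 < L) by (unfold L; assert (0 <= Rabs lb) by apply Rabs_pos; lra).
  assert (HLa : 0 < La) by (unfold La; assert (0 <= Rabs la) by apply Rabs_pos; lra).
  assert (Lip := strict_deriv_lipschitz b p lb Hb).
  assert (Ka := near2_comp p b L _ HL Hp Hbp HbI Lip
                  (Ha (eps / (2 * L)) ltac:(apply Rdiv_lt_0_compat; lra))).
  assert (Kb := Hb (eps / (2 * La)) ltac:(apply Rdiv_lt_0_compat; lra)).
  destruct (near2_and Ka (near2_and Kb Lip)) as [d [Hd K]]; exists d; split; auto.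
  intros y z Hy Hz Hyp Hzp; destruct (K y z Hy Hz Hyp Hzp) as [A1 [A2 A3]].
  simpl in A1; fold L in A3.
  replace (a (b y) - a (b z) - la * lb * (y - z)) with
    ((a (b y) - a (b z) - la * (b y - b z)) + la * (b y - b z - lb * (y - z))) by ring.
  eapply Rle_trans; [apply Rabs_triang | rewrite Rabs_mult].
  assert (B1 : eps / (2 * L) * Rabs (b y - b z) <= eps / 2 * Rabs (y - z)).
  { replace (eps / 2 * Rabs (y - z)) with (eps / (2 * L) * (L * Rabs (y - z))) by (field; lra).
    apply Rmult_le_compat_l; [left; apply Rdiv_lt_0_compat |]; lra. }
  assert (B2 : Rabs la * Rabs (b y - b z - lb * (y - z)) <= eps / 2 * Rabs (y - z)).
  { eapply Rle_trans; [apply Rmult_le_compat_l; [apply Rabs_pos | exact A2] |].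
    replace (eps / 2 * Rabs (y - z)) with (La * (eps / (2 * La) * Rabs (y - z))) by (field; lra).
    apply Rmult_le_compat_r; [| unfold La; lra].
    apply Rmult_le_pos; [left; apply Rdiv_lt_0_compat; lra | apply Rabs_pos]. }
  lra.
Qed.

Lemma strict_deriv_fixed f p l :
  inI p -> strict_deriv f p l ->
  (forall eps, 0 < eps -> exists q, inI q /\ f q = q /\ Rabs (q - p) < eps) -> f p = p.
Proof.
  intros Hp H Hq; destruct (strict_deriv_lipschitz f p l H) as [d [Hd Lip]].
  destruct (Req_dec (f p) p) as [| Hne]; auto; exfalso.
  set (e := Rabs (f p - p)); assert (He : 0 < e) by (apply Rabs_pos_lt; lra).
  set (L := Rabs l + 2).
  assert (HL : 0 < L) by (unfold L; assert (0 <= Rabs l) by apply Rabs_pos; lra).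
  destruct (Hq (Rmin d (e / L))) as [q [HqI [Hfq Hqp]]].
  { apply Rmin_pos; auto; apply Rdiv_lt_0_compat; lra. }
  assert (M1 := Rmin_l d (e / L)); assert (M2 := Rmin_r d (e / L)).
  assert (X := Lip p q Hp HqI ltac:(rewrite Rminus_diag, Rabs_R0; lra) ltac:(lra)).
  rewrite Hfq, (Rabs_minus_sym p q) in X.
  assert (e <= L * Rabs (q - p)).
  { unfold e; replace (f p - p) with ((f p - q) + (q - p)) by ring.
    eapply Rle_trans; [apply Rabs_triang | unfold L; lra]. }
  assert (L * Rabs (q - p) < L * (e / L)) by (apply Rmult_lt_compat_l; lra).
  replace (L * (e / L)) with e in * by (field; lra); lra.
Qed.

Section Action.

Variables (G : Type) (mul : G -> G -> G) (inv : G -> G) (one : G).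
Hypothesis Ggrp : is_group mul inv one.
Variable rho : G -> R -> R.
Hypothesis Hrho : inj_hom_Diff1p mul one rho.

Lemma grp_inv_inv a : inv (inv a) = a.
Proof.
  rewrite <- (grp_one_r Ggrp (inv (inv a))), <- (grp_inv_l Ggrp a), (grp_assoc Ggrp).
  now rewrite (grp_inv_l Ggrp), (grp_one_l Ggrp).
Qed.

Lemma rho_I a x : inI x -> inI (rho a x).
Proof. apply (proj1 (proj1 Hrho a)). Qed.

Lemma rho_C1 a : C1_on_I (rho a).
Proof. destruct (proj1 Hrho a) as [_ [[g [_ [C _]]] _]]; exact C. Qed.

Lemma rho_mono a x y : inI x -> inI y -> x < y -> rho a x < rho a y.
Proof. apply (proj2 (proj2 (proj1 Hrho a))). Qed.

Lemma rho_mul a b x : inI x -> rho (mul a b) x = rho a (rho b x).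
Proof. apply (proj1 (proj2 Hrho)). Qed.

Lemma rho_one x : inI x -> rho one x = x.
Proof. apply (proj1 (proj2 (proj2 Hrho))). Qed.

Lemma rho_inv_l a x : inI x -> rho (inv a) (rho a x) = x.
Proof. intros; rewrite <- rho_mul, (grp_inv_l Ggrp), rho_one; auto. Qed.

Lemma rho_inv_r a x : inI x -> rho a (rho (inv a) x) = x.
Proof. intros; rewrite <- rho_mul, (grp_inv_r Ggrp), rho_one; auto. Qed.

Lemma rho_lt_inv_gt a x : inI x -> rho a x < x -> x < rho (inv a) x.
Proof.
  intros Hx Hlt; destruct (Rlt_le_dec x (rho (inv a) x)) as [| [Hle | Heq]]; auto; exfalso.
  - assert (X := rho_mono a _ _ (rho_I (inv a) x Hx) Hx Hle).
    rewrite rho_inv_r in X; auto; lra.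
  - rewrite <- Heq, rho_inv_r in Hlt; auto; lra.
Qed.

Lemma rho_strict_deriv_exists p :
  inI p -> exists lam : G -> R, forall a, strict_deriv (rho a) p (lam a).
Proof.
  intros Hp; apply (choice (fun a l => strict_deriv (rho a) p l)); intros a.
  apply C1_strict_deriv; auto using rho_C1.
Qed.

Section Generated.

Variables (n : nat) (hgen : nat -> G) (p : R).
Hypothesis Hp : inI p.
Variable lam : G -> R.
Hypothesis Hlam : forall a, strict_deriv (rho a) p (lam a).

Local Notation inH := (gen_by mul inv one (fun g => exists i, (1 <= i <= n)%nat /\ g = hgen i)).
Local Notation inHH := (commutator_subgroup mul inv one inH).
Local Hint Constructors gen_by : core.

Hypothesis Hfix : forall eps, 0 < eps -> exists q, fixset rho inH q /\ Rabs (q - p) < eps.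

Lemma inH_fix_p a : inH a -> rho a p = p.
Proof.
  intros Ha; apply strict_deriv_fixed with (lam a); auto.
  intros eps He; destruct (Hfix eps He) as [q [[Hq1 Hq2] Hq3]]; exists q; auto.
Qed.

Lemma lam_mul a b : rho b p = p -> lam (mul a b) = lam a * lam b.
Proof.
  intros Hb; apply strict_deriv_unique with (rho (mul a b)) p; auto.
  apply strict_deriv_ext with (fun x => rho a (rho b x)); [intros; rewrite rho_mul; auto |].
  apply strict_deriv_comp; auto using rho_I.
Qed.

Lemma lam_one : lam one = 1.
Proof.
  apply strict_deriv_unique with (rho one) p; auto.
  apply strict_deriv_ext with (fun x => x); [intros; rewrite rho_one; auto | apply strict_deriv_id].
Qed.

Lemma lam_inv a : inH a -> lam (inv a) * lam a = 1.
Proof. intros Ha; rewrite <- lam_mul, (grp_inv_l Ggrp); auto using lam_one, inH_fix_p. Qed.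

Lemma inHH_inH h : inHH h -> inH h.
Proof. induction 1 as [c [a [b [Ha [Hb ->]]]] | | |]; auto. Qed.

Lemma lam_commutator h : inHH h -> lam h = 1.
Proof.
  induction 1 as [c [a [b [Ha [Hb ->]]]] | | h1 h2 H1 IH1 H2 IH2 | h H1 IH1].
  - rewrite !lam_mul by auto using inH_fix_p.
    replace (lam (inv a) * lam (inv b) * (lam a * lam b)) with
      ((lam (inv a) * lam a) * (lam (inv b) * lam b)) by ring.
    rewrite !lam_inv; auto; ring.
  - apply lam_one.
  - rewrite lam_mul, IH1, IH2 by auto using inH_fix_p, inHH_inH; ring.
  - assert (X := lam_inv h (inHH_inH h H1)); rewrite IH1 in X; lra.
Qed.

Lemma lam_inH_of_gens :
  (forall i, (1 <= i <= n)%nat -> lam (hgen i) = 1) -> forall a, inH a -> lam a = 1.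
Proof.
  intros Hgen; induction 1 as [a [i [Hi ->]] | | a b Ha IHa Hb IHb | a Ha IHa]; auto.
  - apply lam_one.
  - rewrite lam_mul, IHa, IHb by auto using inH_fix_p; ring.
  - assert (X := lam_inv a Ha); rewrite IHa in X; lra.
Qed.

Definition gen_disp (k : nat) (e : bool) (x : R) : R :=
  rho (signed_pow inv (hgen k) e) x - x.

Fixpoint max_disp (j : nat) (x : R) : R :=
  match j with
  | O => 0
  | S j' => Rmax (max_disp j' x) (Rmax (gen_disp (S j') true x) (gen_disp (S j') false x))
  end.

Lemma max_disp_ge0 j x : 0 <= max_disp j x.
Proof. induction j; simpl; [lra | eapply Rle_trans; [apply IHj | apply Rmax_l]]. Qed.

Lemma gen_disp_le_max_disp j k e x : (1 <= k <= j)%nat -> gen_disp k e x <= max_disp j x.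
Proof.
  induction j as [| j IH]; intros Hk; [lia |]; simpl.
  destruct (Nat.eq_dec k (S j)) as [-> | Hne].
  - eapply Rle_trans; [| apply Rmax_r]; destruct e; [apply Rmax_l | apply Rmax_r].
  - eapply Rle_trans; [apply IH; lia | apply Rmax_l].
Qed.

Lemma max_disp_attained j x :
  0 < max_disp j x -> exists k e, (1 <= k <= j)%nat /\ max_disp j x = gen_disp k e x.
Proof.
  induction j as [| j IH]; simpl; [lra |].
  destruct (Rle_dec (max_disp j x) (Rmax (gen_disp (S j) true x) (gen_disp (S j) false x)))
    as [Hle | Hgt]; [rewrite Rmax_right by auto | rewrite Rmax_left by lra].
  - destruct (Rle_dec (gen_disp (S j) true x) (gen_disp (S j) false x));
      [rewrite Rmax_right by auto; exists (S j), false
      | rewrite Rmax_left by lra; exists (S j), true];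
      split; auto; lia.
  - intros Hpos; destruct (IH Hpos) as [k [e [Hk E]]]; exists k, e; split; auto; lia.
Qed.

Lemma min_abs_disp_le_max_disp i x : (1 <= i <= n)%nat -> inI x ->
  Rmin (Rabs (rho (hgen i) x - x)) (Rabs (rho (inv (hgen i)) x - x)) <= max_disp n x.
Proof.
  intros Hi Hx.
  assert (A1 := gen_disp_le_max_disp n i true x Hi).
  assert (A2 := gen_disp_le_max_disp n i false x Hi).
  unfold gen_disp in A1, A2; simpl in A1, A2.
  destruct (Rle_lt_dec x (rho (hgen i) x)) as [Hle | Hlt].
  - eapply Rle_trans; [apply Rmin_l | rewrite Rabs_right; lra].
  - assert (X := rho_lt_inv_gt (hgen i) x Hx Hlt).
    eapply Rle_trans; [apply Rmin_r | rewrite Rabs_right; lra].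
Qed.

Lemma max_disp_pos x : inI x -> ~ fixset rho inH x -> 0 < max_disp n x.
Proof.
  intros Hx Hnf; destruct (Rlt_le_dec 0 (max_disp n x)) as [| Hle]; auto.
  exfalso; apply Hnf; split; auto.
  assert (Hgen : forall i, (1 <= i <= n)%nat -> rho (hgen i) x = x).
  { intros i Hi; assert (M := min_abs_disp_le_max_disp i x Hi Hx).
    assert (A := Rabs_pos (rho (hgen i) x - x)).
    assert (B := Rabs_pos (rho (inv (hgen i)) x - x)).
    destruct (Rle_dec (Rabs (rho (hgen i) x - x)) (Rabs (rho (inv (hgen i)) x - x))) as [Hab | Hab];
      [rewrite Rmin_left in M by auto | rewrite Rmin_right in M by lra].
    - destruct (Req_dec (rho (hgen i) x) x) as [| Hne]; auto.
      assert (0 < Rabs (rho (hgen i) x - x)) by (apply Rabs_pos_lt; lra); lra.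
    - destruct (Req_dec (rho (inv (hgen i)) x) x) as [E | Hne].
      + rewrite <- E at 1; apply rho_inv_r; auto.
      + assert (0 < Rabs (rho (inv (hgen i)) x - x)) by (apply Rabs_pos_lt; lra); lra. }
  induction 1 as [a [i [Hi ->]] | | a b Ha IHa Hb IHb | a Ha IHa]; auto using rho_one.
  - rewrite rho_mul, IHb; auto.
  - rewrite <- IHa at 1; apply rho_inv_l; auto.
Qed.

Lemma near_p_dilation a : inH a -> lam a = 1 ->
  near p (fun x => Rabs (rho a x - p) <= 2 * Rabs (x - p)).
Proof.
  intros Ha Hl; generalize (near2_at_p Hp (strict_deriv_lipschitz _ _ _ (Hlam a))).
  apply near_mono; intros x Hx K.
  rewrite inH_fix_p, Hl, Rabs_R1 in K by auto; lra.
Qed.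

Lemma disp_flat a eps : lam a = 1 -> 0 < eps ->
  near p (fun x => forall y, inI y -> Rabs (y - p) <= 4 * Rabs (x - p) ->
    Rabs ((rho a y - y) - (rho a x - x)) <= eps * Rabs (y - x)).
Proof.
  intros Hl He; generalize (near2_scale (Hlam a eps He)); apply near_mono.
  intros x Hx K y Hy Hyp; rewrite Hl in K.
  replace (rho a y - y - (rho a x - x)) with (rho a y - rho a x - 1 * (y - x)) by ring.
  apply K; auto; assert (0 <= Rabs (x - p)) by apply Rabs_pos; lra.
Qed.

Lemma disp_small a eps : inH a -> lam a = 1 -> 0 < eps ->
  near p (fun x => Rabs (rho a x - x) <= eps * Rabs (x - p)).
Proof.
  intros Ha Hl He; generalize (near2_at_p Hp (Hlam a eps He)); apply near_mono.
  intros x Hx K; rewrite inH_fix_p, Hl in K by auto.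
  replace (rho a x - x) with (rho a x - p - 1 * (x - p)) by ring; auto.
Qed.

Lemma disp_large a c : inH a -> 0 < c -> 2 * c <= Rabs (lam a - 1) ->
  near p (fun x => c * Rabs (x - p) <= Rabs (rho a x - x)).
Proof.
  intros Ha Hc Hca; generalize (near2_at_p Hp (Hlam a c Hc)); apply near_mono.
  intros x Hx K; rewrite inH_fix_p in K by auto.
  assert (Rabs ((lam a - 1) * (x - p)) <= Rabs (rho a x - x) + c * Rabs (x - p)).
  { replace ((lam a - 1) * (x - p)) with ((rho a x - x) - (rho a x - p - lam a * (x - p))) by ring.
    eapply Rle_trans; [apply Rabs_triang | rewrite Rabs_Ropp; lra]. }
  rewrite Rabs_mult in H; assert (X := Rabs_pos (x - p)); nra.
Qed.

(* If some generator has derivative [<> 1] at [p], then [max_disp n] is of the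
   exact order [|x - p|], while any [h] with derivative 1 moves [x] by [o(|x - p|)]. *)
Lemma disp_le_half_max_of_lam_ne1 h :
  (exists i, (1 <= i <= n)%nat /\ lam (hgen i) <> 1) -> inH h -> lam h = 1 ->
  near p (fun x => rho h x - x <= 1 / 2 * max_disp n x).
Proof.
  intros [i [Hi Hl]] Hh Hlh.
  assert (Hg : inH (hgen i)) by eauto.
  assert (Hli : lam (inv (hgen i)) <> 1).
  { intro E; assert (X := lam_inv _ Hg); rewrite E in X; lra. }
  assert (C1 : 0 < Rabs (lam (hgen i) - 1)) by (apply Rabs_pos_lt; lra).
  assert (C2 : 0 < Rabs (lam (inv (hgen i)) - 1)) by (apply Rabs_pos_lt; lra).
  set (c := Rmin (Rabs (lam (hgen i) - 1)) (Rabs (lam (inv (hgen i)) - 1)) / 2).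
  assert (M1 := Rmin_l (Rabs (lam (hgen i) - 1)) (Rabs (lam (inv (hgen i)) - 1))).
  assert (M2 := Rmin_r (Rabs (lam (hgen i) - 1)) (Rabs (lam (inv (hgen i)) - 1))).
  assert (Hc : 0 < c) by (unfold c; assert (X := Rmin_pos _ _ C1 C2); lra).
  generalize (near_and (disp_large _ c Hg Hc ltac:(unfold c; lra))
               (near_and (disp_large _ c (gen_inv Hg) Hc ltac:(unfold c; lra))
                         (disp_small h (c / 2) Hh Hlh ltac:(lra)))).
  apply near_mono; intros x Hx [K1 [K2 K3]].
  assert (c * Rabs (x - p) <= max_disp n x).
  { eapply Rle_trans; [| apply (min_abs_disp_le_max_disp i x Hi Hx)]; now apply Rmin_glb. }
  assert (X := Rle_abs (rho h x - x)); lra.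
Qed.

Section AllDerivativesOne.

Hypothesis lam_H : forall a, inH a -> lam a = 1.

Lemma inv_disp_le a : inH a ->
  near p (fun x => Rabs (rho (inv a) x - x) <= 2 * Rabs (rho a x - x)).
Proof.
  intros Ha.
  generalize (near_and (near_p_dilation (inv a) (gen_inv Ha) (lam_H _ (gen_inv Ha)))
                       (disp_flat a (1 / 2) (lam_H a Ha) ltac:(lra))).
  apply near_mono; intros x Hx [N F].
  assert (X := Rabs_pos (x - p)).
  specialize (F (rho (inv a) x) (rho_I _ _ Hx) ltac:(lra)); clear N X.
  rewrite rho_inv_r in F by auto.
  revert F; rabs_split; intros; lra.
Qed.

Lemma mul_disp_le a b : inH a -> inH b ->
  near p (fun x => Rabs (rho (mul a b) x - x) <= Rabs (rho a x - x) + 2 * Rabs (rho b x - x)).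
Proof.
  intros Ha Hb.
  generalize (near_and (near_p_dilation b Hb (lam_H b Hb)) (disp_flat a 1 (lam_H a Ha) ltac:(lra))).
  apply near_mono; intros x Hx [N F].
  assert (X := Rabs_pos (x - p)).
  specialize (F (rho b x) (rho_I _ _ Hx) ltac:(lra)); clear N X.
  rewrite rho_mul by auto.
  revert F; rabs_split; intros; lra.
Qed.

Lemma disp_le_max_disp a : inH a ->
  exists C, 0 <= C /\ near p (fun x => Rabs (rho a x - x) <= C * max_disp n x).
Proof.
  induction 1 as [a [i [Hi ->]] | | a b Ha IHa Hb IHb | a Ha IHa].
  - assert (Hg : inH (hgen i)) by eauto.
    exists 2; split; [lra |].
    generalize (inv_disp_le _ (gen_inv Hg)); rewrite grp_inv_inv; apply near_mono.
    intros x Hx K; assert (M := min_abs_disp_le_max_disp i x Hi Hx).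
    assert (2 * Rmin (Rabs (rho (hgen i) x - x)) (Rabs (rho (inv (hgen i)) x - x))
              >= Rabs (rho (hgen i) x - x)).
    { apply Rmin_case_strong; intros; [assert (X := Rabs_pos (rho (hgen i) x - x)) |]; lra. }
    lra.
  - exists 0; split; [lra |]; apply near_everywhere; intros x Hx.
    rewrite rho_one, Rminus_diag, Rabs_R0 by auto; lra.
  - destruct IHa as [Ca [HCa Ka]]; destruct IHb as [Cb [HCb Kb]].
    exists (Ca + 2 * Cb); split; [lra |].
    generalize (near_and (mul_disp_le a b Ha Hb) (near_and Ka Kb)); apply near_mono.
    intros x Hx [K [K1 K2]]; lra.
  - destruct IHa as [Ca [HCa Ka]].
    exists (2 * Ca); split; [lra |].
    generalize (near_and (inv_disp_le a Ha) Ka); apply near_mono; intros x Hx [K1 K2]; lra.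
Qed.

(* For [h = a^-1 b^-1 a b] write [u = a (b x)] and [w = b (a x)], so that
   [h x - x = F u - F w] with [F = a^-1 b^-1].  Since all derivatives at [p] are 1,
   [|u - w| <= eps (|a x - x| + |b x - x|)], and both terms are [O(max_disp n x)]. *)
Lemma basic_commutator_disp_small a b eps : inH a -> inH b -> 0 < eps ->
  near p (fun x => Rabs (rho (mul (mul (inv a) (inv b)) (mul a b)) x - x) <= eps * max_disp n x).
Proof.
  intros Ha Hb He.
  set (F := mul (inv a) (inv b)).
  assert (HF : inH F) by (unfold F; auto).
  destruct (disp_le_max_disp a Ha) as [Ca [HCa Ka]].
  destruct (disp_le_max_disp b Hb) as [Cb [HCb Kb]].
  set (e := eps / (2 * (Ca + Cb + 1))).
  assert (He' : 0 < e) by (unfold e; apply Rdiv_lt_0_compat; lra).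
  assert (LipF := near2_scale (strict_deriv_lipschitz _ _ _ (Hlam F))).
  rewrite (lam_H F HF), Rabs_R1 in LipF.
  generalize (near_and (near_and Ka Kb)
               (near_and (near_and (near_scale (near_p_dilation a Ha (lam_H a Ha)))
                                   (near_scale (near_p_dilation b Hb (lam_H b Hb))))
                 (near_and (near_and (disp_flat a e (lam_H a Ha) He')
                                     (disp_flat b e (lam_H b Hb) He')) LipF))).
  apply near_mono; intros x Hx [[Ka' Kb'] [[Na Nb] [[La Lb] LF]]].
  assert (X := Rabs_pos (x - p)).
  set (ax := rho a x) in *; set (bx := rho b x) in *.
  assert (Iax : inI ax) by (apply rho_I; auto).
  assert (Ibx : inI bx) by (apply rho_I; auto).
  assert (Nax := Na x Hx ltac:(lra)); assert (Nbx := Nb x Hx ltac:(lra)).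
  fold ax in Nax; fold bx in Nbx.
  set (u := rho a bx); set (w := rho b ax).
  assert (Nu : Rabs (u - p) <= 4 * Rabs (x - p)).
  { assert (Y := Na bx Ibx ltac:(lra)); fold u in Y; lra. }
  assert (Nw : Rabs (w - p) <= 4 * Rabs (x - p)).
  { assert (Y := Nb ax Iax ltac:(lra)); fold w in Y; lra. }
  assert (Eh : rho (mul F (mul a b)) x = rho F u) by (rewrite !rho_mul; auto).
  assert (Ex : rho F w = x).
  { unfold F, w, ax; rewrite rho_mul, rho_inv_l, rho_inv_l; auto using rho_I. }
  assert (LFuw := LF u w ltac:(apply rho_I; auto) ltac:(apply rho_I; auto) Nu Nw).
  assert (LAa := La bx Ibx ltac:(lra)); assert (LBb := Lb ax Iax ltac:(lra)).
  fold u in LAa; fold w in LBb.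
  assert (Huw : Rabs (u - w) <= e * Rabs (bx - x) + e * Rabs (ax - x)).
  { replace (u - w) with ((u - bx - (ax - x)) - (w - ax - (bx - x))) by ring.
    eapply Rle_trans; [apply Rabs_triang | rewrite Rabs_Ropp; lra]. }
  assert (HD := max_disp_ge0 n x); set (D := max_disp n x) in *.
  assert (T1 : e * Rabs (bx - x) <= e * (Cb * D)) by (apply Rmult_le_compat_l; lra).
  assert (T2 : e * Rabs (ax - x) <= e * (Ca * D)) by (apply Rmult_le_compat_l; lra).
  assert (T3 : 2 * e * (Ca + Cb + 1) = eps) by (unfold e; field; lra).
  rewrite Eh, <- Ex at 1; nra.
Qed.

Lemma commutator_disp_small h : inHH h -> forall eps, 0 < eps ->
  near p (fun x => Rabs (rho h x - x) <= eps * max_disp n x).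
Proof.
  induction 1 as [c [a [b [Ha [Hb ->]]]] | | h1 h2 H1 IH1 H2 IH2 | h H1 IH1]; intros eps He.
  - now apply basic_commutator_disp_small.
  - apply near_everywhere; intros x Hx.
    rewrite rho_one, Rminus_diag, Rabs_R0 by auto.
    apply Rmult_le_pos; [lra | apply max_disp_ge0].
  - generalize (near_and (near_and (IH1 (eps / 3) ltac:(lra)) (IH2 (eps / 3) ltac:(lra)))
                         (mul_disp_le h1 h2 (inHH_inH _ H1) (inHH_inH _ H2))).
    apply near_mono; intros x Hx [[K1 K2] K]; lra.
  - generalize (near_and (IH1 (eps / 2) ltac:(lra)) (inv_disp_le h (inHH_inH _ H1))).
    apply near_mono; intros x Hx [K1 K]; lra.
Qed.

End AllDerivativesOne.

Lemma commutator_disp_le_half_max h : inHH h ->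
  near p (fun x => rho h x - x <= 1 / 2 * max_disp n x).
Proof.
  intros Hh.
  destruct (classic (exists i, (1 <= i <= n)%nat /\ lam (hgen i) <> 1)) as [Hne | Hall].
  - apply disp_le_half_max_of_lam_ne1; auto using inHH_inH, lam_commutator.
  - assert (lam_H : forall a, inH a -> lam a = 1).
    { apply lam_inH_of_gens; intros i Hi; apply NNPP; intros Hl; apply Hall; eauto. }
    generalize (commutator_disp_small lam_H h Hh (1 / 2) ltac:(lra)); apply near_mono.
    intros x Hx K; assert (X := Rle_abs (rho h x - x)); lra.
Qed.

(* [(k m, e m)] is a generator and sign attaining [max_disp n (ps m)]. *)
Lemma commutators_below_maximal_generator (ps : nat -> R) :
  (forall m, inI (ps m) /\ ~ fixset rho inH (ps m)) -> Un_cv ps p ->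
  exists (k : nat -> nat) (e : nat -> bool),
    (forall m, (1 <= k m <= n)%nat) /\
    forall h, inHH h ->
      exists M : nat, forall m, (m >= M)%nat ->
        rho h (ps m) < rho (signed_pow inv (hgen (k m)) (e m)) (ps m).
Proof.
  intros Hps Hcv.
  destruct (choice (fun m ke => (1 <= fst ke <= n)%nat /\
                      max_disp n (ps m) = gen_disp (fst ke) (snd ke) (ps m))) as [ke Hke].
  { intros m; destruct (Hps m) as [HI HnF].
    destruct (max_disp_attained n (ps m) (max_disp_pos _ HI HnF)) as [k [e He]].
    exists (k, e); exact He. }
  exists (fun m => fst (ke m)), (fun m => snd (ke m)); split; [apply Hke |].
  intros h Hh; destruct (commutator_disp_le_half_max h Hh) as [d [Hd K]].
  destruct (Hcv d Hd) as [M HM]; exists M; intros m Hm.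
  destruct (Hps m) as [HI HnF]; assert (Hpos := max_disp_pos _ HI HnF).
  specialize (K (ps m) HI (HM m Hm)); destruct (Hke m) as [_ E].
  unfold gen_disp in E; lra.
Qed.

End Generated.

End Action.

Theorem lemma2p7
  (G : Type) (mul : G -> G -> G) (inv : G -> G) (one : G)
  (Ggrp : is_group mul inv one)
  (rho : G -> R -> R) (Hrho : inj_hom_Diff1p mul one rho)
  (n : nat) (hgen : nat -> G)
  (p : R) (ps : nat -> R) :
  let H := gen_by mul inv one (fun g => exists i, (1 <= i <= n)%nat /\ g = hgen i) in
  frontier_in_I (fixset rho H) p ->
  (forall m, inI (ps m) /\ ~ fixset rho H (ps m)) ->
  Un_cv ps p ->
  exists (k : nat -> nat) (e : nat -> bool),
    (forall m, (1 <= k m <= n)%nat) /\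
    forall h, commutator_subgroup mul inv one H h ->
      exists M : nat, forall m, (m >= M)%nat ->
        rho h (ps m) < rho (signed_pow inv (hgen (k m)) (e m)) (ps m).
Proof.
  intros H [Hp [Hfix _]] Hps Hcv.
  destruct (rho_strict_deriv_exists G mul one rho Hrho p Hp) as [lam Hlam].
  exact (commutators_below_maximal_generator G mul inv one Ggrp rho Hrho n hgen p Hp
           lam Hlam Hfix ps Hps Hcv).
Qed.
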